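(* Let $k\ge 2$ and let $P$ be a finite poset excluding $\mathbf{k}+\mathbf{k}$, of height $h$. If every convex subposet $Q$ of $P$ of height at most $4k-4$ satisfies $\dim(Q)\le d_1$, then $\dim(P)\le (h+1)d_1$.
   Context: $\mathbf{k}+\mathbf{k}$ is the disjoint union of two $k$-element chains with all points of one incomparable to all points of the other; $P$ excludes it if no subposet is isomorphic to it. A subposet $Q$ is convex if $x,z\in Q$ and $x<y<z$ imply $y\in Q$. $\dim$ denotes the Dushnik–Miller dimension. *)

From mathcomp Require Import all_boot.
Set Implicit Arguments. Unset Strict Implicit. Unset Printing Implicit Defensive.

Section Posets.
Variable T : finType.

Definition partial_order (le : rel T) : Prop :=
  [/\ reflexive le, antisymmetric le & transitive le].

(* The order of k + k on 'I_k + 'I_k: two disjoint chains, mutually incomparable. *)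
Definition kk_le (k : nat) (a b : 'I_k + 'I_k) : bool :=
  match a, b with
  | inl i, inl j => (i <= j)%N
  | inr i, inr j => (i <= j)%N
  | _, _ => false
  end.

Definition contains_kk (le : rel T) (k : nat) : Prop :=
  exists phi : 'I_k + 'I_k -> T,
    injective phi /\ forall a b, le (phi a) (phi b) = kk_le a b.

Definition excludes_kk (le : rel T) (k : nat) : Prop := ~ contains_kk le k.

Definition is_chain (le : rel T) (C : {set T}) : bool :=
  [forall x in C, forall y in C, le x y || le y x].

Definition height (le : rel T) (A : {set T}) : nat :=
  \max_(C : {set T} | (C \subset A) && is_chain le C) #|C|.

Definition convex (le : rel T) (Q : {set T}) : Prop :=
  forall x y z, x \in Q -> z \in Q -> le x y -> le y z -> y \in Q.

Definition linear_ext_on (le : rel T) (A : {set T}) (L : rel T) : Prop :=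
  [/\ {in A, reflexive L}, {in A &, antisymmetric L},
      {in A & &, transitive L}, {in A &, total L}
    & {in A &, forall x y, le x y -> L x y}].

Definition realizer_on (le : rel T) (A : {set T}) (t : nat) (Ls : 'I_t -> rel T) : Prop :=
  (forall i, linear_ext_on le A (Ls i)) /\ ({in A &, forall x y, le x y <-> (forall i, Ls i x y)}).

(* dim(A, le) <= d (Dushnik-Miller dimension = least size of a realizer):
   some realizer of size at most d exists.
   Convention: a realizer consists of at least one linear extension. *)
Definition dim_le (le : rel T) (A : {set T}) (d : nat) : Prop :=
  exists (t : nat) (Ls : 'I_t -> rel T), [/\ (0 < t)%N, (t <= d)%N & realizer_on le A Ls].

End Posets.

(* Fix a maximum chain C, of size h.  For i <= h the layer M_i consists of the points
   with at most i elements of C strictly below them and at most h - i strictly above;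
   layers are convex.  A linear extension L of M_i extends to P by putting first the
   points with more than h - i elements of C above them, then M_i ordered by L, then the
   rest.  If x is not below y, the layer indexed by the number of elements of C below y
   separates them, so realizers of the h + 1 layers give a realizer of P of size
   (h + 1) d1.
   A chain Y in a layer has at most 4k - 4 elements.  Let u be the k-th lowest and v
   the k-th highest element of Y.  By maximality of C, the part of Y between u and v is
   no larger than the window of C that is neither strictly below u nor strictly above v.
   No element of C lies strictly between the extremes of Y (they are in the same layer),
   so the window splits into two chains, incomparable to the k lowest, resp. the k
   highest, elements of Y; as P excludes k + k, each has fewer than k elements. *)

From mathcomp Require Import all_boot zify.
Set Implicit Arguments. Unset Strict Implicit. Unset Printing Implicit Defensive.

Definition dual (T : Type) (le : rel T) : rel T := fun x y => le y x.

Definition strict (T : eqType) (le : rel T) : rel T := fun x y => (x != y) && le x y.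

Lemma strict_dual (T : eqType) (le : rel T) x y : strict (dual le) x y = strict le y x.
Proof. by rewrite /strict eq_sym. Qed.

Section Chains.
Variables (T : finType) (le : rel T).

Lemma is_chainP (C : {set T}) :
  reflect {in C &, forall x y, le x y || le y x} (is_chain le C).
Proof.
apply: (iffP forall_inP) => [C_total x y xC yC | C_total x xC].
  exact: (forall_inP (C_total x xC) y yC).
by apply/forall_inP => y yC; apply: C_total.
Qed.

Lemma chainS (A B : {set T}) : A \subset B -> is_chain le B -> is_chain le A.
Proof.
move=> /subsetP sAB /is_chainP B_total; apply/is_chainP => x y xA yA.
exact: (B_total _ _ (sAB x xA) (sAB y yA)).
Qed.

Lemma chain_sep (A : {set T}) (P : pred T) :
  is_chain le A -> is_chain le [set x in A | P x].
Proof. by apply: chainS; rewrite setIdE subsetIl. Qed.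

Lemma chain_card_le_height (A C : {set T}) :
  C \subset A -> is_chain le C -> #|C| <= height le A.
Proof. by move=> sCA cC; apply: leq_bigmax_cond; rewrite sCA cC. Qed.

Lemma exists_chain_height (A : {set T}) :
  exists C : {set T}, [/\ C \subset A, is_chain le C & #|C| = height le A].
Proof.
pose P (C : {set T}) := (C \subset A) && is_chain le C.
have P0 : P set0 by rewrite /P sub0set; apply/is_chainP => x; rewrite inE.
case: (arg_maxnP (fun C : {set T} => #|C|) P0) => C /andP[sCA cC] C_max.
exists C; split=> //; apply/eqP; rewrite eqn_leq chain_card_le_height //=.
by apply/bigmax_leqP => Z; apply: C_max.
Qed.

Hypothesis le_po : partial_order le.

Lemma po_refl x : le x x.
Proof. by case: le_po. Qed.

Lemma po_anti x y : le x y -> le y x -> x = y.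
Proof. by case: le_po => _ anti _ lxy lyx; apply: anti; rewrite lxy lyx. Qed.

Lemma po_trans x y z : le x y -> le y z -> le x z.
Proof. by case: le_po => _ _ tr; apply: tr. Qed.

Lemma po_dual : partial_order (dual le).
Proof.
split=> [x | x y /andP[lyx lxy] | y x z lyx lzy]; first exact: po_refl.
  exact: po_anti.
exact: (po_trans lzy lyx).
Qed.

Lemma strict_le_trans x y z : strict le x y -> le y z -> strict le x z.
Proof.
move=> /andP[nxy lxy] lyz; rewrite /strict (po_trans lxy lyz) andbT.
by apply: contraNneq nxy => exz; rewrite exz in lxy *; rewrite (po_anti lxy lyz).
Qed.

Lemma le_strict_trans x y z : le x y -> strict le y z -> strict le x z.
Proof.
move=> lxy /andP[nyz lyz]; rewrite /strict (po_trans lxy lyz) andbT.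
by apply: contraNneq nyz => exz; rewrite -exz in lyz *; rewrite (po_anti lyz lxy).
Qed.

Lemma chain_le_nstrict (C : {set T}) x y : is_chain le C -> x \in C -> y \in C ->
  ~~ strict le x y -> le y x.
Proof.
move=> /is_chainP C_total xC yC; rewrite negb_and negbK.
case: eqVneq => [-> _ | _ /= nlxy]; first exact: po_refl.
by have := C_total x y xC yC; rewrite (negbTE nlxy).
Qed.

Lemma incomparable_to_segment p u c y : le p y -> le y u -> p != u ->
  ~~ strict le c u -> ~~ strict le p c -> ~~ le c y && ~~ le y c.
Proof.
move=> lpy lyu npu ncu npc.
have nlcy : ~~ le c y.
  apply/negP => lcy; have ecu : c = u.
    by apply/eqP; move: ncu; rewrite /strict (po_trans lcy lyu) andbT negbK.
  by move: npc; rewrite ecu /strict npu (po_trans lpy lyu).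
rewrite nlcy; apply/negP => lyc; have epc : p = c.
  by apply/eqP; move: npc; rewrite /strict (po_trans lpy lyc) andbT negbK.
by move: nlcy; rewrite -epc lpy.
Qed.

Definition rank (Y : {set T}) x := #|[set z in Y | le z x]|.

Lemma rank_strict (Y : {set T}) u :
  u \in Y -> rank Y u = #|[set z in Y | strict le z u]|.+1.
Proof.
move=> uY; rewrite /rank -add1n.
have -> : [set z in Y | le z u] = u |: [set z in Y | strict le z u].
  apply/setP => z; rewrite !inE /strict.
  by case: eqVneq => [->|_]; rewrite ?uY ?po_refl.
by rewrite cardsU1 inE /strict eqxx andbF.
Qed.

Variable Y : {set T}.
Hypothesis Y_chain : is_chain le Y.

Lemma rank_leE : {in Y &, forall x y, le x y = (rank Y x <= rank Y y)}.
Proof.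
move=> x y xY yY; case lxy: (le x y).
  apply/esym/subset_leq_card/subsetP => z; rewrite !inE => /andP[-> lzx] /=.
  exact: (po_trans lzx lxy).
have lyx : le y x by apply: (chain_le_nstrict Y_chain xY yY); rewrite /strict lxy andbF.
apply/esym/negbTE; rewrite -ltnNge; apply: proper_card; apply/properP; split.
  by apply/subsetP => z; rewrite !inE => /andP[-> lzy] /=; apply: (po_trans lzy lyx).
by exists x; rewrite !inE ?xY ?po_refl ?lxy.
Qed.

Lemma rank_gt0 x : x \in Y -> 0 < rank Y x.
Proof. by move=> xY; rewrite rank_strict. Qed.

Lemma rank_onto n : 0 < n <= #|Y| -> exists2 x, x \in Y & rank Y x = n.
Proof.
move=> /andP[n_gt0 nY].
have rank_inj : {in enum Y &, injective (rank Y)}.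
  move=> x y; rewrite !mem_enum => xY yY exy.
  by apply: po_anti; rewrite rank_leE // exy.
have ranks_uniq : uniq [seq rank Y x | x <- enum Y].
  by rewrite map_inj_in_uniq // enum_uniq.
have ranks_sub : {subset [seq rank Y x | x <- enum Y] <= iota 1 #|Y|}.
  move=> j /mapP[x]; rewrite mem_enum => xY ->; rewrite mem_iota rank_gt0 //=.
  by rewrite add1n ltnS subset_leq_card //; apply/subsetP => z; rewrite inE => /andP[].
have [|_ ranks_eq] := uniq_min_size ranks_uniq ranks_sub.
  by rewrite size_iota size_map -cardE.
have : n \in iota 1 #|Y| by rewrite mem_iota; lia.
by rewrite -ranks_eq => /mapP[x]; rewrite mem_enum => xY ->; exists x.
Qed.

Lemma rank1_min p : p \in Y -> rank Y p = 1 -> {in Y, forall y, le p y}.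
Proof. by move=> pY rp y yY; rewrite rank_leE // rp rank_gt0. Qed.

Lemma chain_embedding n : n <= #|Y| ->
  exists f : 'I_n -> T, (forall j, f j \in Y) /\ (forall i j, le (f i) (f j) = (i <= j)).
Proof.
move=> nY.
have /fin_all_exists[f fP] : forall j : 'I_n, exists x, x \in Y /\ rank Y x = j.+1.
  move=> j; have [x xY rx] := rank_onto (n := j.+1) (leq_trans (ltn_ord j) nY).
  by exists x.
exists f; split=> [j | i j]; first by case: (fP j).
by have [fiY ri] := fP i; have [fjY rj] := fP j; rewrite rank_leE // ri rj ltnS.
Qed.

Lemma chain_card_split u v : u \in Y -> v \in Y ->
  #|Y| <= #|[set z in Y | strict le z u]| + #|[set z in Y | le u z && le z v]|
          + #|[set z in Y | strict le v z]|.
Proof.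
move=> uY vY.
have cover : Y \subset [set z in Y | strict le z u] :|: [set z in Y | le u z && le z v]
                       :|: [set z in Y | strict le v z].
  apply/subsetP => z zY; rewrite !inE zY /=.
  case: (boolP (strict le z u)) => //= nzu; case: (boolP (strict le v z)); rewrite ?orbT //.
  move=> nvz; rewrite (chain_le_nstrict Y_chain zY uY nzu).
  by rewrite (chain_le_nstrict Y_chain vY zY nvz).
apply: leq_trans (subset_leq_card cover) _.
by apply: leq_trans (leq_card_setU _ _) _; rewrite leq_add2r leq_card_setU.
Qed.

End Chains.

Lemma chain_dual (T : finType) (le : rel T) (C : {set T}) :
  is_chain (dual le) C = is_chain le C.
Proof. by apply/is_chainP/is_chainP => C_total x y xC yC; rewrite /dual orbC; apply: C_total. Qed.

Lemma kk_le_anti k (a b : 'I_k + 'I_k) : kk_le a b -> kk_le b a -> a = b.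
Proof. by case: a b => i [] j //= lij lji; congr (_ _); apply/val_inj/anti_leq; rewrite lij. Qed.

Lemma incomparable_chain_card (T : finType) (le : rel T) k (A S : {set T}) :
  partial_order le -> excludes_kk le k -> is_chain le A -> is_chain le S -> k <= #|A| ->
  {in A & S, forall a c, ~~ le a c && ~~ le c a} -> #|S| < k.
Proof.
move=> le_po nokk cA cS kA incomp; rewrite ltnNge; apply/negP => kS; apply: nokk.
have [f [fA f_mono]] := chain_embedding le_po cA kA.
have [g [gS g_mono]] := chain_embedding le_po cS kS.
pose phi (a : 'I_k + 'I_k) := match a with inl i => f i | inr j => g j end.
have phi_mono a b : le (phi a) (phi b) = kk_le a b.
  case: a b => i [] j /=; rewrite ?f_mono ?g_mono //.
    by have /andP[/negbTE] := incomp _ _ (fA i) (gS j).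
  by have /andP[_ /negbTE] := incomp _ _ (fA j) (gS i).
exists phi; split=> // a b eab; apply: kk_le_anti; rewrite -phi_mono eab po_refl //.
Qed.

Lemma dim_le_realizer (T : finType) (le : rel T) (A : {set T}) d :
  dim_le le A d -> 0 < d /\ exists Ls : 'I_d -> rel T, realizer_on le A Ls.
Proof.
case=> t [Ls [t_gt0 td [Ls_lin Ls_re]]]; split; first exact: (leq_trans t_gt0 td).
exists (fun j => Ls (insubd (Ordinal t_gt0) (val j))); split=> [j | x y xA yA].
  exact: Ls_lin.
rewrite Ls_re //; split=> [all_i j | all_j i]; first exact: all_i.
have := all_j (widen_ord td i); congr (Ls _ x y); apply: val_inj.
by rewrite val_insubd /= ltn_ord.
Qed.

Definition lex (T : Type) (f : T -> nat) (R : nat -> rel T) : rel T :=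
  fun x y => if f x == f y then R (f x) x y else f x < f y.

Section LinearExtensions.
Variables (T : finType) (le : rel T).
Hypothesis le_po : partial_order le.

Lemma linear_ext_onS (A B : {set T}) L :
  A \subset B -> linear_ext_on le B L -> linear_ext_on le A L.
Proof.
move=> /subsetP sAB [L_refl L_anti L_trans L_total L_ext].
split; [exact: sub_in1 L_refl | exact: sub_in2 L_anti | exact: sub_in111 L_trans
       | exact: sub_in2 L_total | exact: sub_in2 L_ext].
Qed.

Lemma lex_linear_ext (A : {set T}) (f : T -> nat) (R : nat -> rel T) :
  {in A &, forall x y, le x y -> f x <= f y} ->
  (forall n, linear_ext_on le [set x in A | f x == n] (R n)) ->
  linear_ext_on le A (lex f R).
Proof.
move=> f_mono R_lin.
have fiber x y : x \in A -> f x = f y -> x \in [set z in A | f z == f y].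
  by move=> xA exy; rewrite inE xA exy eqxx.
rewrite /lex; split.
- move=> x xA; rewrite eqxx; have [R_refl _ _ _ _] := R_lin (f x).
  exact: (R_refl _ (fiber _ _ xA erefl)).
- move=> x y xA yA; rewrite (eq_sym (f y)); case: eqVneq => [exy | _] /andP[]; last lia.
  rewrite -exy => Rxy Ryx; have [_ R_anti _ _ _] := R_lin (f x).
  by apply: R_anti; rewrite ?Rxy ?(fiber _ _ xA erefl) ?(fiber _ _ yA (esym exy)).
- move=> y x z yA xA zA.
  case: eqVneq => [exy | nxy]; case: eqVneq => [eyz | nyz]; case: eqVneq => [exz | nxz] //;
    try lia.
  rewrite -exy => Rxy Ryz; have [_ _ R_trans _ _] := R_lin (f x).
  apply: (R_trans y) Rxy Ryz; apply: fiber; by rewrite // exz.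
- move=> x y xA yA; rewrite (eq_sym (f y)); case: eqVneq => [exy | nxy]; last lia.
  rewrite -exy; have [_ _ _ R_total _] := R_lin (f x).
  by apply: R_total; apply: fiber.
- move=> x y xA yA lxy; have := f_mono x y xA yA lxy.
  case: eqVneq => [exy | nxy] fxy; last lia.
  have [_ _ _ _ R_ext] := R_lin (f x).
  by apply: R_ext; rewrite // fiber.
Qed.

Definition depth x := #|[set z | le z x]|.

Lemma depth_lt x y : strict le x y -> depth x < depth y.
Proof.
move=> /andP[nxy lxy]; apply: proper_card; apply/properP; split.
  by apply/subsetP => z; rewrite !inE => lzx; apply: (po_trans le_po lzx lxy).
exists y; rewrite !inE ?po_refl //; apply: contra nxy => lyx.
by rewrite (po_anti le_po lxy lyx).
Qed.

Definition base_ext : rel T :=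
  lex depth (fun _ x y => enum_rank x <= enum_rank y).

Lemma base_ext_linear : linear_ext_on le [set: T] base_ext.
Proof.
apply: lex_linear_ext => [x y _ _ lxy | n].
  case: (eqVneq x y) => [-> // | nxy].
  by apply/ltnW/depth_lt; rewrite /strict nxy.
split=> [x _ | x y _ _ /anti_leq/val_inj/enum_rank_inj // | y x z _ _ _ | x y _ _ |].
- exact: leqnn.
- exact: leq_trans.
- exact: leq_total.
move=> x y; rewrite !inE => /eqP dx /eqP dy lxy.
case: (eqVneq x y) => [-> // | nxy].
suff : depth x < depth y by rewrite dx dy ltnn.
by apply: depth_lt; rewrite /strict nxy.
Qed.

End LinearExtensions.

Section Layers.
Variables (T : finType) (le : rel T) (C : {set T}).
Hypothesis le_po : partial_order le.

Definition below y := [set c in C | strict le c y].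
Definition above y := [set c in C | strict le y c].

Definition layer i := [set y | (#|below y| <= i) && (#|above y| <= #|C| - i)].

Lemma below_mono x y : le x y -> below x \subset below y.
Proof.
move=> lxy; apply/subsetP => c; rewrite !inE => /andP[-> lcx].
exact: (strict_le_trans le_po lcx lxy).
Qed.

Lemma above_anti x y : le x y -> above y \subset above x.
Proof.
move=> lxy; apply/subsetP => c; rewrite !inE => /andP[-> lyc].
exact: (le_strict_trans le_po lxy lyc).
Qed.

Lemma layer_convex i : convex le (layer i).
Proof.
move=> x y z; rewrite !inE => /andP[_ ax] /andP[bz _] lxy lyz.
rewrite (leq_trans (subset_leq_card (below_mono lyz)) bz).
by rewrite (leq_trans (subset_leq_card (above_anti lxy)) ax).
Qed.

Lemma card_above_below x y : ~~ le x y -> #|above x| + #|below y| <= #|C|.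
Proof.
move=> nxy; rewrite -cardsUI.
have -> : above x :&: below y = set0.
  apply/setP => c; rewrite !inE; apply/negbTE; apply: contra nxy.
  move=> /andP[/andP[_ /andP[_ lxc]] /andP[_ /andP[_ lcy]]].
  exact: (po_trans le_po lxc lcy).
rewrite cards0 addn0 subset_leq_card //.
by apply/subsetP => c; rewrite !inE => /orP[] /andP[].
Qed.

(* 0: below layer i, 1: in layer i, 2: above layer i. *)
Definition block i y := if #|C| - i < #|above y| then 0 else if i < #|below y| then 2 else 1.

Lemma block_eq1 i y : (block i y == 1) = (y \in layer i).
Proof. by rewrite /block inE; case: ltnP => ?; case: ltnP => ? //=; lia. Qed.

Lemma block_mono i x y : le x y -> block i x <= block i y.
Proof.
move=> lxy; have bxy := subset_leq_card (below_mono lxy).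
have ayx := subset_leq_card (above_anti lxy).
rewrite /block; case: (ltnP _ #|above x|); case: (ltnP _ #|above y|);
  case: (ltnP i #|below x|); case: (ltnP i #|below y|); lia.
Qed.

Definition glue i L := lex (block i) (fun b => if b == 1 then L else base_ext le).

Lemma glue_linear i L :
  linear_ext_on le (layer i) L -> linear_ext_on le [set: T] (glue i L).
Proof.
move=> L_lin; apply: lex_linear_ext => [x y _ _ | n]; first exact: block_mono.
case: eqVneq => [-> | _]; last exact: (linear_ext_onS (subsetT _) (base_ext_linear le_po)).
by apply: (linear_ext_onS _ L_lin); apply/subsetP => x; rewrite inE in_setT block_eq1.
Qed.

Lemma glue_separates L x y : ~~ le x y -> glue #|below y| L x y ->
  [/\ x \in layer #|below y|, y \in layer #|below y| & L x y].
Proof.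
move=> nxy; have := card_above_below nxy.
rewrite /glue /lex -!block_eq1 /block ltnn.
by case: ltnP => ay; case: ltnP => ax; case: ltnP => bx //=; lia.
Qed.

Lemma dim_le_layers d : (forall i, i <= #|C| -> dim_le le (layer i) d) ->
  dim_le le [set: T] (#|C|.+1 * d).
Proof.
move=> layer_dim; have [d_gt0 _] := dim_le_realizer (layer_dim 0 (leq0n _)).
have /fin_all_exists[R R_re] : forall i : 'I_#|C|.+1,
    exists Ls : 'I_d -> rel T, realizer_on le (layer i) Ls.
  by move=> i; have [_] := dim_le_realizer (layer_dim i (ltn_ord i)).
case: d d_gt0 R R_re {layer_dim} => // d _ R R_re.
pose Ls (n : 'I_(#|C|.+1 * d.+1)) :=
  glue (n %/ d.+1) (R (inord (n %/ d.+1)) (inord (n %% d.+1))).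
have Ls_index (i : 'I_#|C|.+1) (j : 'I_d.+1) : exists n, Ls n = glue i (R i j).
  have lt_n : i * d.+1 + j < #|C|.+1 * d.+1 by have := ltn_ord i; have := ltn_ord j; nia.
  exists (Ordinal lt_n); rewrite /Ls /= divnMDl // modnMDl divn_small // modn_small //.
  by rewrite addn0; congr (glue _ (R _ _)); apply: val_inj; rewrite /= inordK.
have Ls_lin n : linear_ext_on le [set: T] (Ls n).
  have lt_i : n %/ d.+1 < #|C|.+1 by rewrite ltn_divLR.
  by apply: glue_linear; have [+ _] := R_re (inord (n %/ d.+1)); rewrite inordK.
exists (#|C|.+1 * d.+1), Ls; split=> //; split=> // x y _ _; split=> [lxy n | le_all].
  by have [_ _ _ _ ->] := Ls_lin n; rewrite ?inE.
apply: contraT => nxy; have lt_i : #|below y| < #|C|.+1.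
  by rewrite ltnS subset_leq_card //; apply/subsetP => c; rewrite inE => /andP[].
have [_ Ri] := R_re (Ordinal lt_i).
have [n0 e0] := Ls_index (Ordinal lt_i) ord0.
have := le_all n0; rewrite e0 => /(glue_separates nxy)[xL yL _].
case/negP: (nxy); apply/(Ri x y xL yL) => j; have [n e] := Ls_index (Ordinal lt_i) j.
by have := le_all n; rewrite e => /(glue_separates nxy)[].
Qed.

Hypothesis C_chain : is_chain le C.

Lemma layer_not_between i p q c : p \in layer i -> q \in layer i -> c \in C ->
  ~~ (strict le p c && strict le c q).
Proof.
rewrite !inE => /andP[_ ap] /andP[bq _] cC; apply/negP => /andP[pc cq].
have c_above : c |: above c \subset above p.
  apply/subsetP => c'; rewrite !inE => /predU1P[-> | /andP[-> /andP[_ lcc']]].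
    by rewrite cC pc.
  exact: (strict_le_trans le_po pc lcc').
have c_below : c |: below c \subset below q.
  apply/subsetP => c'; rewrite !inE => /predU1P[-> | /andP[-> /andP[_ lc'c]]].
    by rewrite cC cq.
  exact: (le_strict_trans le_po lc'c cq).
have C_cover : C \subset c |: (above c :|: below c).
  apply/subsetP => c' c'C; rewrite !inE c'C /strict /=.
  by case: eqVneq => //= _; move/is_chainP: C_chain; apply.
have := subset_leq_card c_above; have := subset_leq_card c_below.
have := subset_leq_card C_cover.
rewrite !cardsU1 cardsU !inE /strict !eqxx !andbF /=; lia.
Qed.

Definition window u v := [set c in C | ~~ strict le c u && ~~ strict le v c].

Lemma window_card k i (Y : {set T}) p q u v : excludes_kk le k -> is_chain le Y ->
  p \in layer i -> q \in layer i -> p != u -> q != v ->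
  {in Y, forall y, le p y} -> {in Y, forall y, le y q} ->
  k <= #|[set z in Y | le z u]| -> k <= #|[set z in Y | le v z]| ->
  #|window u v| <= (k - 1) + (k - 1).
Proof.
move=> nokk Y_chain pL qL npu nqv p_min q_max ku kv.
pose W_low := [set c in window u v | ~~ strict le p c].
pose W_high := [set c in window u v | ~~ strict le c q].
have W_split : window u v \subset W_low :|: W_high.
  apply/subsetP => c; rewrite !inE => /and3P[cC ncu nvc].
  by rewrite cC ncu nvc -negb_and (layer_not_between pL qL cC).
have W_chain : is_chain le (window u v) := chain_sep _ C_chain.
have card_low : #|W_low| < k.
  apply: (incomparable_chain_card le_po nokk (chain_sep _ Y_chain) (chain_sep _ W_chain) ku).
  move=> y c; rewrite !inE => /andP[yY lyu] /andP[/and3P[_ ncu _] npc].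
  by rewrite andbC (incomparable_to_segment le_po (p_min y yY) lyu npu ncu npc).
have card_high : #|W_high| < k.
  apply: (incomparable_chain_card le_po nokk (chain_sep _ Y_chain) (chain_sep _ W_chain) kv).
  move=> y c; rewrite !inE => /andP[yY lvy] /andP[/and3P[_ _ nvc] ncq].
  by apply: (incomparable_to_segment (po_dual le_po) (q_max y yY) lvy nqv); rewrite strict_dual.
have := subset_leq_card W_split; rewrite cardsU; lia.
Qed.

Hypothesis C_max : forall Z : {set T}, is_chain le Z -> #|Z| <= #|C|.

Lemma interval_card_le_window (Y : {set T}) u v : is_chain le Y ->
  #|[set z in Y | le u z && le z v]| <= #|window u v|.
Proof.
move=> Y_chain; set I := [set z in Y | _].
set X := [set c in C | strict le c u || strict le v c].
have card_C : #|X| + #|window u v| = #|C|.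
  rewrite -(cardsID [set c | strict le c u || strict le v c] C).
  by congr (_ + _); apply: eq_card => c; rewrite !inE ?negb_or // andbC.
have IX_comparable z c : z \in I -> c \in X -> le z c || le c z.
  rewrite !inE => /and3P[_ luz lzv] /andP[_ /orP[/andP[_ lcu] | /andP[_ lvc]]].
    by rewrite (po_trans le_po lcu luz) orbT.
  by rewrite (po_trans le_po lzv lvc).
have IX_chain : is_chain le (I :|: X).
  apply/is_chainP => a b /setUP[aI | aX] /setUP[bI | bX].
  - by move/is_chainP: Y_chain; apply; [move: aI | move: bI]; rewrite inE => /andP[].
  - exact: IX_comparable.
  - by rewrite orbC IX_comparable.
  - by move/is_chainP: C_chain; apply; [move: aX | move: bX]; rewrite inE => /andP[].
have IX_disjoint : I :&: X = set0.
  apply/setP => z; rewrite !inE; apply/negbTE/negP.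
  move=> /andP[/and3P[_ luz lzv] /andP[_ /orP[/andP[nzu lzu] | /andP[nvz lvz]]]].
    by move: nzu; rewrite (po_anti le_po lzu luz) eqxx.
  by move: nvz; rewrite (po_anti le_po lvz lzv) eqxx.
have := C_max IX_chain; rewrite cardsU IX_disjoint cards0 subn0; lia.
Qed.

Lemma layer_chain_bound k i (Y : {set T}) : 2 <= k -> excludes_kk le k ->
  Y \subset layer i -> is_chain le Y -> #|Y| <= 4 * k - 4.
Proof.
move=> k_ge2 nokk /subsetP YL Y_chain; rewrite leqNgt; apply/negP => Y_big.
have dual_po := po_dual le_po.
have Y_dual : is_chain (dual le) Y by rewrite chain_dual.
have one_le_Y : 0 < 1 <= #|Y| by lia.
have k_le_Y : 0 < k <= #|Y| by lia.
have [p pY rp] := rank_onto le_po Y_chain one_le_Y.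
have [u uY ru] := rank_onto le_po Y_chain k_le_Y.
have [q qY rq] := rank_onto dual_po Y_dual one_le_Y.
have [v vY rv] := rank_onto dual_po Y_dual k_le_Y.
have npu : p != u by apply: contraTneq k_ge2 => epu; rewrite -ru -epu rp.
have nqv : q != v by apply: contraTneq k_ge2 => eqv; rewrite -rv -eqv rq.
have := window_card nokk Y_chain (YL p pY) (YL q qY) npu nqv
  (rank1_min le_po Y_chain pY rp) (rank1_min dual_po Y_dual qY rq)
  (eq_leq (esym ru)) (eq_leq (esym rv)).
have := chain_card_split le_po Y_chain uY vY.
have := interval_card_le_window u v Y_chain.
have := rank_strict le_po uY; have := rank_strict dual_po vY.
have -> : [set z in Y | strict (dual le) z v] = [set z in Y | strict le v z].
  by apply/setP => z; rewrite !inE strict_dual.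
rewrite ru rv; lia.
Qed.

End Layers.

Theorem proposition8 (T : finType) (le : rel T) (k h d1 : nat) :
  partial_order le ->
  (2 <= k)%N ->
  excludes_kk le k ->
  height le [set: T] = h ->
  (forall Q : {set T}, convex le Q -> (height le Q <= 4 * k - 4)%N -> dim_le le Q d1) ->
  dim_le le [set: T] ((h + 1) * d1).
Proof.
move=> le_po k_ge2 nokk height_h layer_dim.
have [C [_ C_chain C_card]] := exists_chain_height le [set: T].
have C_max (Z : {set T}) : is_chain le Z -> #|Z| <= #|C|.
  by rewrite C_card; apply: chain_card_le_height (subsetT Z).
rewrite height_h in C_card; rewrite addn1 -C_card.
apply: dim_le_layers => // i _; apply: layer_dim; first exact: layer_convex.
apply/bigmax_leqP => Y /andP[YL Y_chain].
exact: (layer_chain_bound le_po C_chain C_max k_ge2 nokk YL Y_chain).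
Qed.
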